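(* For any $\alpha,\beta\in\{0,1\}^\infty$ with $\alpha\ne\beta$, $$\frac{1}{5^{|\alpha\wedge\beta|+1}}\le d_H(\mathcal K_\alpha,\mathcal K_\beta)<\frac{3\sqrt5}{5^{|\alpha\wedge\beta|+1}},\qquad d(\mathcal K_\alpha,\mathcal K_\beta)\ge\frac{1}{5^{|\alpha\wedge\beta|+1}}.$$
   Context: Let $I=[0,1]^3$. Let $\mathcal D_0=\{(i,2,2),(2,i,2),(2,2,i): i=0,1,2,3,4\}$ and $\mathcal D_1=\{d\in\{0,\ldots,4\}^3:\ \text{at least two coordinates of } d \text{ lie in }\{0,4\}\}$. For $i=0,1$ let $T_i(A)=\bigcup_{d\in\mathcal D_i}\frac{d+A}{5}$. For $\alpha=\alpha_1\alpha_2\ldots\in\{0,1\}^\infty$ let $\mathcal K_\alpha=\bigcap_{k\ge1}T_{\alpha_1}\circ\cdots\circ T_{\alpha_k}(I)$. $|\alpha\wedge\beta|$ denotes the length of the longest common initial segment of $\alpha$ and $\beta$. $d_H$ is the Hausdorff distance and $d(A,B)=\inf\{|a-b|:a\in A,b\in B\}$. *)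

From HB Require Import structures.
From mathcomp Require Import all_boot all_order all_algebra.
From mathcomp Require Import all_classical all_reals.
Set Implicit Arguments. Unset Strict Implicit. Unset Printing Implicit Defensive.
Import Order.TTheory GRing.Theory Num.Theory.
Local Open Scope ring_scope.
Local Open Scope classical_set_scope.

Section Defs.
Variable R : realType.

Definition pt := (R * R * R)%type.

Definition edist (p q : pt) : R :=
  Num.sqrt ((p.1.1 - q.1.1) ^+ 2 + (p.1.2 - q.1.2) ^+ 2 + (p.2 - q.2) ^+ 2).

Definition cubeI : set pt :=
  [set p | (0 <= p.1.1 <= 1) /\ (0 <= p.1.2 <= 1) /\ (0 <= p.2 <= 1)].

Definition D0 (d : nat * nat * nat) : Prop :=
  let: (a, b, c) := d in
  [/\ (a <= 4)%N, (b <= 4)%N & (c <= 4)%N] /\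
  ((b == 2%N) && (c == 2%N) \/ (a == 2%N) && (c == 2%N) \/ (a == 2%N) && (b == 2%N)).

Definition in04 (x : nat) : bool := (x == 0%N) || (x == 4%N).

Definition D1 (d : nat * nat * nat) : Prop :=
  let: (a, b, c) := d in
  [/\ (a <= 4)%N, (b <= 4)%N & (c <= 4)%N] /\
  (in04 a && in04 b \/ in04 a && in04 c \/ in04 b && in04 c).

Definition Dset (i : bool) := if i then D1 else D0.

Definition sim (d : nat * nat * nat) (x : pt) : pt :=
  (((d.1.1)%:R + x.1.1) / 5, ((d.1.2)%:R + x.1.2) / 5, ((d.2)%:R + x.2) / 5).

Definition Tmap (i : bool) (A : set pt) : set pt :=
  [set y | exists d, Dset i d /\ exists2 x, A x & y = sim d x].

(* Tcomp alpha k A = T_{alpha_1} o ... o T_{alpha_k} (A); alpha_{j+1} = alpha j *)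
Fixpoint Tcomp (alpha : nat -> bool) (k : nat) (A : set pt) : set pt :=
  match k with
  | 0 => A
  | k'.+1 => Tcomp alpha k' (Tmap (alpha k') A)
  end.

Definition Kset (alpha : nat -> bool) : set pt :=
  [set x | forall k, (1 <= k)%N -> Tcomp alpha k cubeI x].

Definition pdist (a : pt) (B : set pt) : R := inf [set edist a b | b in B].
Definition setdist (A B : set pt) : R :=
  inf [set edist p.1 p.2 | p in [set p : pt * pt | A p.1 /\ B p.2]].
Definition hausdorff (A B : set pt) : R :=
  Num.max (sup [set pdist a B | a in A]) (sup [set pdist b A | b in B]).

End Defs.

(* A point of K_alpha has the form sim_iter D (n+1) z with z in the cube and
   D i in D_(alpha i); conversely every digit sequence compatible with alpha is
   the base-5 address of a point of K_alpha.  If alpha and beta first differ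
   at n, the n-th digits of a in K_alpha and b in K_beta come from D_0 and D_1,
   so in some coordinate one is 2 and the other 0 or 4: the integer parts of
   5^(n+1) a and 5^(n+1) b differ by at least 2 there while their fractional
   parts differ by at most 1, whence |a - b| >= 5^-(n+1).  Conversely, keeping
   the first n digits of a, replacing the n-th by a digit of D_(beta n) within
   2 of it in every coordinate and continuing with any digits allowed by beta
   gives a point of K_beta within 3/5^(n+1) of a in each coordinate, hence at
   distance at most 3 sqrt 3 / 5^(n+1) < 3 sqrt 5 / 5^(n+1). *)

From HB Require Import structures.
From mathcomp Require Import all_boot all_order all_algebra.
From mathcomp Require Import all_classical all_reals.
From mathcomp Require Import ring lra zify.
Set Implicit Arguments. Unset Strict Implicit. Unset Printing Implicit Defensive.
Import Order.TTheory GRing.Theory Num.Theory.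
Local Open Scope ring_scope.
Local Open Scope classical_set_scope.

Section FractalCubes.
Variable R : realType.
Implicit Types (a b p q z w : pt R) (A B : set (pt R)).
Implicit Types (d e : nat * nat * nat) (D : nat -> nat * nat * nat).

Fixpoint base5_partial (m : nat) (c : nat -> nat) : R :=
  if m is m'.+1 then ((c 0%N)%:R + base5_partial m' (fun i => c i.+1)) / 5 else 0.

Definition base5 (c : nat -> nat) : R := sup (range (base5_partial ^~ c)).

Lemma base5_partial_bound m c : (forall i, (c i <= 4)%N) ->
  0 <= base5_partial m c <= 1.
Proof.
elim: m c => [|m IH] c c_le4 /=; first by rewrite lexx ler01.
have /andP[ge0 le1] := IH _ (fun i => c_le4 i.+1).
have : (c 0%N)%:R <= 4 :> R by rewrite ler_nat.
have : 0 <= (c 0%N)%:R :> R by [].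
by move=> *; apply/andP; split; lra.
Qed.

Lemma has_sup_base5_partial c : (forall i, (c i <= 4)%N) ->
  has_sup (range (base5_partial ^~ c)).
Proof.
move=> c_le4; split; first by exists (base5_partial 0 c), 0%N.
by exists 1 => _ [m _ <-]; case/andP: (base5_partial_bound m c_le4).
Qed.

Lemma base5_partial_le c m : (forall i, (c i <= 4)%N) -> base5_partial m c <= base5 c.
Proof. by move=> c_le4; apply: (ub_le_sup (has_sup_base5_partial c_le4).2); exists m. Qed.

Lemma base5_bound c : (forall i, (c i <= 4)%N) -> 0 <= base5 c <= 1.
Proof.
move=> c_le4; rewrite (base5_partial_le 0 c_le4); apply: ge_sup; first by exists 0, 0%N.
by move=> _ [m _ <-]; case/andP: (base5_partial_bound m c_le4).
Qed.

Lemma base5_unfold c : (forall i, (c i <= 4)%N) ->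
  base5 c = ((c 0%N)%:R + base5 (fun i => c i.+1)) / 5.
Proof.
move=> c_le4; have c'_le4 i : (c i.+1 <= 4)%N by [].
have /andP[tail_ge0 _] := base5_bound c'_le4.
have head_ge0 : 0 <= (c 0%N)%:R :> R by [].
apply/eqP; rewrite eq_le; apply/andP; split.
  apply: ge_sup; first by exists 0, 0%N.
  move=> _ [[|m] _ <-] /=; first lra.
  by have := base5_partial_le m c'_le4; lra.
suff : base5 (fun i => c i.+1) <= 5 * base5 c - (c 0%N)%:R :> R by lra.
apply: ge_sup; first by exists 0, 0%N.
by move=> _ [m _ <-]; have /= := base5_partial_le m.+1 c_le4; lra.
Qed.

Definition coord (j : nat) p : R :=
  if j is j'.+1 then (if j' is 0 then p.1.2 else p.2) else p.1.1.

Definition dcoord (j : nat) d : nat :=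
  if j is j'.+1 then (if j' is 0 then d.1.2 else d.2) else d.1.1.

Lemma coord_sim j d p : coord j (sim d p) = ((dcoord j d)%:R + coord j p) / 5.
Proof. by case: j => [|[|j]]. Qed.

Lemma coord_cube j p : cubeI p -> 0 <= coord j p <= 1.
Proof. by case=> [? [? ?]]; case: j => [|[|j]]. Qed.

Lemma edistC p q : edist p q = edist q p.
Proof.
rewrite /edist -(sqrrN (p.1.1 - _)) -(sqrrN (p.1.2 - _)) -(sqrrN (p.2 - _)).
by rewrite !opprB.
Qed.

Lemma coord_dist_le_edist j p q : `|coord j p - coord j q| <= edist p q.
Proof.
rewrite /edist -sqrtr_sqr; apply: ler_wsqrtr.
have := sqr_ge0 (p.1.1 - q.1.1); have := sqr_ge0 (p.1.2 - q.1.2).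
have := sqr_ge0 (p.2 - q.2).
by case: j => [|[|j]] /=; lra.
Qed.

Lemma edist_le_coord_dist p q (r : R) : (forall j, `|coord j p - coord j q| <= r) ->
  edist p q <= Num.sqrt 3 * r.
Proof.
move=> le_r; have r_ge0 : 0 <= r := le_trans (normr_ge0 _) (le_r 0%N).
have sqr_le j : (coord j p - coord j q) ^+ 2 <= r ^+ 2.
  by rewrite -real_normK ?num_real // lerXn2r ?nnegrE.
rewrite -(ger0_norm r_ge0) -sqrtr_sqr -sqrtrM // /edist ler_wsqrtr //.
by have := sqr_le 0%N; have := sqr_le 1%N; have := sqr_le 2%N; rewrite /=; lra.
Qed.

Fixpoint sim_iter D (k : nat) z : pt R :=
  if k is k'.+1 then sim_iter D k' (sim (D k') z) else z.

Lemma eq_sim_iter D D' k z : (forall i, (i < k)%N -> D i = D' i) ->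
  sim_iter D k z = sim_iter D' k z.
Proof. by elim: k z => //= k IH z eqD; rewrite eqD // IH // => i /ltnW; apply: eqD. Qed.

Lemma TcompP (alpha : nat -> bool) k (A : set (pt R)) p :
  Tcomp alpha k A p <->
  exists2 D, (forall i, (i < k)%N -> Dset (alpha i) (D i)) &
    exists2 z, A z & p = sim_iter D k z.
Proof.
elim: k A p => [|k IH] A p /=.
  by split=> [Ap | [D _ [z Az ->]]] //; exists (fun=> (0, 0, 0)%N) => //; exists p.
rewrite IH; split=> [[D DD [_ [d [Dd [z Az ->]]] ->]] | [D DD [z Az ->]]].
  exists (fun i => if i == k then d else D i).
    by move=> i; rewrite ltnS leq_eqVlt; case: eqVneq => [-> | _ /= /DD].
  exists z => //=; rewrite eqxx; apply: eq_sim_iter => i ltik.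
  by rewrite (ltn_eqF ltik).
exists D; first by move=> i ltik; apply: DD; apply: ltnW.
by exists (sim (D k) z) => //; exists (D k); split; [apply: DD | exists z].
Qed.

Lemma coord_sim_iter j D k z :
  exists N : nat, coord j (sim_iter D k z) = (N%:R + coord j z) / 5 ^+ k.
Proof.
elim: k z => [|k IH] z /=; first by exists 0%N; rewrite add0r expr0 divr1.
have [N ->] := IH (sim (D k) z); exists (5 * N + dcoord j (D k))%N.
by rewrite coord_sim natrD natrM exprS; field; rewrite expf_neq0 // pnatr_eq0.
Qed.

Lemma coord_sim_iter_sub j D k z w :
  coord j (sim_iter D k z) - coord j (sim_iter D k w) = (coord j z - coord j w) / 5 ^+ k.
Proof.
elim: k z w => [|k IH] z w /=; first by rewrite expr0 divr1.
by rewrite IH !coord_sim exprS; field; rewrite expf_neq0 // pnatr_eq0.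
Qed.

Definition digit_le4 d := [/\ (d.1.1 <= 4)%N, (d.1.2 <= 4)%N & (d.2 <= 4)%N].

Lemma Dset_digit_le4 (b : bool) d : Dset b d -> digit_le4 d.
Proof. by case: b; case: d => [[x y] z] [[]]. Qed.

Definition address D : pt R :=
  (base5 (fun i => (D i).1.1), base5 (fun i => (D i).1.2), base5 (fun i => (D i).2)).

Section Digits.
Variable D : nat -> nat * nat * nat.
Hypothesis D_le4 : forall i, digit_le4 (D i).

Lemma address_unfold : address D = sim (D 0%N) (address (fun i => D i.+1)).
Proof. by congr (_, _, _); apply: base5_unfold => i; case: (D_le4 i). Qed.

Lemma address_cube : cubeI (address D).
Proof. by split; [|split]; apply: base5_bound => i; case: (D_le4 i). Qed.

End Digits.

Lemma address_shift D k : (forall i, digit_le4 (D i)) ->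
  address D = sim_iter D k (address (fun i => D (i + k)%N)).
Proof.
move=> D_le4; elim: k => [|k IH] /=; first by congr address; apply: funext => i; rewrite addn0.
rewrite {1}IH (address_unfold (D := fun i => D (i + k)%N)) // add0n.
by congr (sim_iter _ _ (sim _ (address _))); apply: funext => i; rewrite addnS addSn.
Qed.

Lemma address_Kset (beta : nat -> bool) D : (forall i, Dset (beta i) (D i)) ->
  Kset beta (address D).
Proof.
move=> DD k _; have D_le4 i := Dset_digit_le4 (DD i).
rewrite (address_shift k D_le4); apply/TcompP; exists D => [i _ | ]; first exact: DD.
by exists (address (fun i => D (i + k)%N)) => //; apply: address_cube => i.
Qed.

Lemma D0_D1_separated d e : D0 d -> D1 e ->
  exists j, dcoord j d = 2%N /\ (dcoord j e = 0%N \/ dcoord j e = 4%N).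
Proof.
have in04P x : in04 x -> x = 0%N \/ x = 4%N by case/orP=> /eqP->; [left | right].
case: d => [[a b] c]; case: e => [[a' b'] c'] [_ d2] [_ e04].
by case: d2 => [|[]] /andP[/eqP-> /eqP->]; case: e04 => [|[]] /andP[/in04P ? /in04P ?];
  solve [exists 0%N; split=> // | exists 1%N; split=> // | exists 2%N; split=> //].
Qed.

Definition default_digit (b : bool) : nat * nat * nat :=
  if b then (0, 0, 0)%N else (2, 2, 2)%N.

Lemma Dset_default_digit (b : bool) : Dset b (default_digit b).
Proof. by case: b; split=> //; left. Qed.

Lemma Dset_near_digit (b : bool) d : digit_le4 d -> exists2 e, Dset b e &
  forall j, (dcoord j d <= dcoord j e + 2)%N /\ (dcoord j e <= dcoord j d + 2)%N.
Proof.
case: d => [[x y] z] [/= x_le4 y_le4 z_le4]; case: b; last first.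
  by exists (2, 2, z)%N; [split=> //; do 2 right | case=> [|[|j]] /=; lia].
pose round t := if (t <= 2)%N then 0%N else 4%N.
have round04 t : in04 (round t) by rewrite /round; case: ifP.
have round_le4 t : (round t <= 4)%N by rewrite /round; case: ifP.
exists (round x, round y, round z); first by split; [split | left; rewrite !round04].
by case=> [|[|j]] /=; rewrite /round; case: ifP; lia.
Qed.

Lemma integer_gap (N N' : nat) (s t : R) : (s = 2 \/ s = -2) ->
  `|t| <= 1 -> 1 <= `|5 * N%:R - 5 * N'%:R + s + t|.
Proof.
rewrite ler_norml => s2 /andP[t_ge t_le]; rewrite ler_normr.
case: (ltngtP N N') => [ltNN' | ltN'N | ->].
- have : N%:R + 1 <= N'%:R :> R by rewrite natr1 ler_nat.
  by move=> *; apply/orP; right; case: s2 => ->; lra.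
- have : N'%:R + 1 <= N%:R :> R by rewrite natr1 ler_nat.
  by move=> *; apply/orP; left; case: s2 => ->; lra.
- by apply/orP; case: s2 => ->; [left | right]; lra.
Qed.

Lemma Kset_neq0 (alpha : nat -> bool) : @Kset R alpha !=set0.
Proof.
exists (address (default_digit \o alpha)).
by apply: address_Kset => i; apply: Dset_default_digit.
Qed.

Lemma edist_sim_iter_separated D D' k d e z w : D0 d -> D1 e -> cubeI z -> cubeI w ->
  (5 ^+ k.+1)^-1 <= edist (sim_iter D k (sim d z)) (sim_iter D' k (sim e w)).
Proof.
move=> D0d D1e cz cw; have [j [dj2 ej04]] := D0_D1_separated D0d D1e.
apply: le_trans (coord_dist_le_edist j _ _).
have [N ->] := coord_sim_iter j D k (sim d z).
have [N' ->] := coord_sim_iter j D' k (sim e w).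
have /andP[z_ge0 z_le1] := coord_cube j cz; have /andP[w_ge0 w_le1] := coord_cube j cw.
rewrite !coord_sim dj2.
have -> : (N%:R + (2%:R + coord j z) / 5) / 5 ^+ k
         - (N'%:R + ((dcoord j e)%:R + coord j w) / 5) / 5 ^+ k
   = (5 * N%:R - 5 * N'%:R + (2 - (dcoord j e)%:R) + (coord j z - coord j w)) / 5 ^+ k.+1 :> R.
  by rewrite exprS; field; rewrite expf_neq0 // pnatr_eq0.
have scale_gt0 : 0 < (5 ^+ k.+1)^-1 :> R by rewrite invr_gt0 exprn_gt0.
rewrite normrM (gtr0_norm scale_gt0) ler_peMl ?(ltW scale_gt0) //; apply: integer_gap.
  by case: ej04 => ->; [left | right]; rewrite ?subr0 //; lra.
by rewrite ler_norml; apply/andP; split; lra.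
Qed.

Lemma Kset_separated (alpha beta : nat -> bool) n a b : alpha n <> beta n ->
  Kset alpha a -> Kset beta b -> (5 ^+ n.+1)^-1 <= edist a b.
Proof.
move=> neq_n /(_ n.+1 isT) /TcompP[D DD [z cz ->]] /(_ n.+1 isT) /TcompP[D' DD' [w cw ->]] /=.
move: (DD n (ltnSn n)) (DD' n (ltnSn n)) neq_n.
case: (alpha n) (beta n) => -[] //= Dn D'n _; last exact: edist_sim_iter_separated.
by rewrite edistC; apply: edist_sim_iter_separated.
Qed.

Lemma edist_sim_iter_near D k d e z w : cubeI z -> cubeI w ->
  (forall j, (dcoord j d <= dcoord j e + 2)%N /\ (dcoord j e <= dcoord j d + 2)%N) ->
  edist (sim_iter D k (sim d z)) (sim_iter D k (sim e w)) <= Num.sqrt 3 * (3 / 5 ^+ k.+1).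
Proof.
move=> cz cw near; apply: edist_le_coord_dist => j.
have /andP[z_ge0 z_le1] := coord_cube j cz; have /andP[w_ge0 w_le1] := coord_cube j cw.
have [] := near j; rewrite -!(ler_nat R) !natrD => de_le ed_le.
rewrite coord_sim_iter_sub !coord_sim.
rewrite (_ : _ / 5 ^+ k =
  ((dcoord j d)%:R - (dcoord j e)%:R + coord j z - coord j w) / 5 ^+ k.+1).
  have scale_ge0 : 0 <= (5 ^+ k.+1)^-1 :> R by rewrite invr_ge0 exprn_ge0.
  rewrite normrM (ger0_norm scale_ge0) ler_wpM2r //.
  by rewrite ler_norml; apply/andP; split; lra.
by rewrite exprS; field; rewrite expf_neq0 // pnatr_eq0.
Qed.

Lemma Kset_near (alpha beta : nat -> bool) n a : (forall i, (i < n)%N -> alpha i = beta i) ->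
  Kset alpha a -> exists2 b, Kset beta b & edist a b <= Num.sqrt 3 * (3 / 5 ^+ n.+1).
Proof.
move=> eq_prefix /(_ n.+1 isT) /TcompP[D DD [z cz ->]].
have [e Dn_e near] := Dset_near_digit (beta n) (Dset_digit_le4 (DD n (ltnSn n))).
pose D' i := if (i < n)%N then D i else if i == n then e else default_digit (beta i).
have DD' i : Dset (beta i) (D' i).
  rewrite /D'; case: ltnP => [ltin | _].
    by rewrite -eq_prefix //; apply: DD; apply: ltnW.
  by case: eqP => [-> | _] //; apply: Dset_default_digit.
have D'_le4 i := Dset_digit_le4 (DD' i).
exists (address D'); first exact: address_Kset.
rewrite (address_shift n.+1 D'_le4) /= {2}/D' ltnn eqxx (@eq_sim_iter D' D); last first.
  by move=> i ltin; rewrite /D' ltin.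
by apply: edist_sim_iter_near => //; apply: address_cube => i.
Qed.

Lemma pdist_le a B b : B b -> pdist a B <= edist a b.
Proof. by move=> Bb; apply: ge_inf; [exists 0 => _ [? _ <-]; apply: sqrtr_ge0 | exists b]. Qed.

Lemma ubound_pdist A B r : (forall a, A a -> exists2 b, B b & edist a b <= r) ->
  ubound [set pdist a B | a in A] r.
Proof.
by move=> near _ [a Aa <-]; have [b Bb] := near a Aa; apply: le_trans (pdist_le _ Bb).
Qed.

Lemma hausdorff_le A B r : A !=set0 -> B !=set0 ->
  (forall a, A a -> exists2 b, B b & edist a b <= r) ->
  (forall b, B b -> exists2 a, A a & edist b a <= r) -> hausdorff A B <= r.
Proof.
move=> [a Aa] [b Bb] nearAB nearBA; rewrite /hausdorff ge_max.
apply/andP; split; apply: ge_sup.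
- by exists (pdist a B), a.
- exact: ubound_pdist nearAB.
- by exists (pdist b A), b.
- exact: ubound_pdist nearBA.
Qed.

(* r' only bounds the set whose sup is taken: sup of an unbounded set is 0. *)
Lemma hausdorff_ge A B a r r' : A a -> B !=set0 ->
  (forall a, A a -> exists2 b, B b & edist a b <= r') ->
  (forall b, B b -> r <= edist a b) -> r <= hausdorff A B.
Proof.
move=> Aa [b Bb] nearAB far; rewrite /hausdorff le_max; apply/orP; left.
apply: le_trans (ub_le_sup (ex_intro _ r' (ubound_pdist nearAB)) (ex_intro2 _ _ a Aa erefl)).
by apply: lb_le_inf; [exists (edist a b), b | move=> _ [b' Bb' <-]; apply: far].
Qed.

Lemma setdist_ge A B r : A !=set0 -> B !=set0 ->
  (forall a b, A a -> B b -> r <= edist a b) -> r <= setdist A B.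
Proof.
move=> [a Aa] [b Bb] far; apply: lb_le_inf; first by exists (edist a b), (a, b).
by move=> _ [[a' b'] [Aa' Bb'] <-]; apply: far.
Qed.

End FractalCubes.

Theorem corollary1 (R : realType) (alpha beta : nat -> bool) (n : nat) :
  (forall i, (i < n)%N -> alpha i = beta i) -> alpha n <> beta n ->
  [/\ (5%:R ^+ n.+1)^-1 <= hausdorff (@Kset R alpha) (@Kset R beta) :> R,
      hausdorff (@Kset R alpha) (@Kset R beta) < 3 * Num.sqrt 5 / 5%:R ^+ n.+1
    & (5%:R ^+ n.+1)^-1 <= setdist (@Kset R alpha) (@Kset R beta)].
Proof.
move=> eq_prefix neq_n.
have eq_prefix' i : (i < n)%N -> beta i = alpha i by move/eq_prefix.
have [a Ka] := Kset_neq0 R alpha; have KA_neq0 := Kset_neq0 R alpha.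
have KB_neq0 := Kset_neq0 R beta.
have far := Kset_separated (R := R) neq_n.
have nearAB := Kset_near (R := R) eq_prefix; have nearBA := Kset_near (R := R) eq_prefix'.
have sqrt3_lt : Num.sqrt 3 * (3 / 5 ^+ n.+1) < 3 * Num.sqrt 5 / 5 ^+ n.+1 :> R.
  rewrite mulrCA mulrA ltr_pM2r ?invr_gt0 ?exprn_gt0 // ltr_pM2l //.
  by rewrite ltr_sqrt // ltr_nat.
split.
- exact: hausdorff_ge Ka KB_neq0 nearAB (fun b => far a b Ka).
- exact: le_lt_trans (hausdorff_le KA_neq0 KB_neq0 nearAB nearBA) sqrt3_lt.
- exact: setdist_ge KA_neq0 KB_neq0 far.
Qed.
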